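(* Let $G\cong\mathbb Z/2\mathbb Z\times\mathbb Z/2\mathbb Z$ with generators $\sigma_1,\sigma_2$, and let $M$ be a $\mathbb Z[G]$-module, written multiplicatively, such that $(M,\sigma_1,\sigma_2)$ satisfies QH90. Then \[\ker(1-\sigma_1)(1-\sigma_2)=\ker(1-\sigma_1)\cdot\ker(1-\sigma_2)\] if and only if the following holds: for all $m_1,m_2\in M$ satisfying (1) $(1+\sigma_1)\cdot m_1=1=(1+\sigma_2)\cdot m_2$ and (2) $m_1\,\sigma_1(m_2)=m_2\,\sigma_2(m_1)$, there exists $n\in M$ with $m_i=(1-\sigma_i)\cdot n$ for $i=1,2$.
   Context: The module action is written multiplicatively: for $c_g\in\mathbb Z$, $(\sum_g c_g g)\cdot m=\prod_g g(m)^{c_g}$; e.g. $(1+\sigma_i)\cdot m=m\,\sigma_i(m)$ and $(1-\sigma_i)\cdot m=m/\sigma_i(m)$, where $1$ denotes the identity of $G$ (as an element of $\mathbb Z[G]$), and the identity of $M$ is also written $1$. For $x\in\mathbb Z[G]$, $\ker x=\{m\in M: x\cdot m=1\}$. For subsets $A,B\subseteq M$, $A\cdot B=\{ab:a\in A,b\in B\}$. $(M,\sigma_1,\sigma_2)$ satisfies QH90 means: for each $i\in\{1,2\}$ and $m\in M$, if $(1+\sigma_i)\cdot m=1$ then there exists $n\in M$ with $m=(1-\sigma_i)\cdot n$. *)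

From HB Require Import structures.
From mathcomp Require Import all_boot all_algebra.
Set Implicit Arguments. Unset Strict Implicit. Unset Printing Implicit Defensive.
Import GRing.Theory.
Local Open Scope ring_scope.

(* The Z[G]-module M (written multiplicatively in the paper) is modelled as an
   additive abelian group V : zmodType; the paper's product m*n is m + n,
   the identity 1 of M is 0, and m/n is m - n. *)

Definition Z2xZ2_action (V : zmodType) (s1 s2 : {additive V -> V}) : Prop :=
  [/\ forall m, s1 (s1 m) = m, forall m, s2 (s2 m) = m
    & forall m, s1 (s2 m) = s2 (s1 m)].

Definition one_minus (V : zmodType) (s : V -> V) (m : V) : V := m - s m.
Definition one_plus (V : zmodType) (s : V -> V) (m : V) : V := m + s m.

Definition kerZG (V : zmodType) (x : V -> V) : V -> Prop := fun m => x m = 0.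

Definition setmul (V : zmodType) (A B : V -> Prop) : V -> Prop :=
  fun m => exists a b, A a /\ B b /\ m = a + b.

Definition set_eq (V : Type) (A B : V -> Prop) : Prop := forall m, A m <-> B m.

Definition QH90 (V : zmodType) (s1 s2 : V -> V) : Prop :=
  forall s, (s = s1 \/ s = s2) ->
    forall m, one_plus s m = 0 -> exists n, m = one_minus s n.

From HB Require Import structures.
From mathcomp Require Import all_boot all_algebra.
Import GRing.Theory.
Local Open Scope ring_scope.

(* Both directions pass through the additive operators 1 - s1, 1 - s2, which
   commute, and (1 + s) (1 - s) = 1 - s^2 = 0.  Condition (2) says exactly
   (1 - s2) m1 = (1 - s1) m2.  Given m1, m2, QH90 writes m1 = (1 - s1) x; then
   y := m2 - (1 - s2) x lies in ker (1 - s1) and ker (1 + s2), so y = (1 - s2) z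
   by QH90 again, and z lies in ker (1 - s1)(1 - s2).  Splitting z = u + v along
   the two kernels, n := x + u solves both equations.  Conversely, for m in
   ker (1 - s1)(1 - s2) the pair (0, (1 - s2) m) satisfies (1) and (2); a
   common preimage n gives m = n + (m - n) in ker (1 - s1) . ker (1 - s2). *)

Lemma addr_eq_subr (V : zmodType) (a b c d : V) :
  (a + b = c + d) <-> (a - d = c - b).
Proof.
split=> e; first by rewrite -(addrK b a) e addrAC addrK.
by rewrite -(subrK d a) e addrAC subrK.
Qed.

Section OneMinusAdditive.
Variables (V : zmodType) (s : {additive V -> V}).

Lemma one_minus0 : one_minus s 0 = 0.
Proof. by rewrite /one_minus raddf0 subr0. Qed.

Lemma one_minusD m n : one_minus s (m + n) = one_minus s m + one_minus s n.
Proof. by rewrite /one_minus (raddfD s) opprD addrACA. Qed.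

Lemma one_minusB m n : one_minus s (m - n) = one_minus s m - one_minus s n.
Proof. by rewrite /one_minus (raddfB s) !opprD !opprK [RHS]addrACA. Qed.

Lemma one_plus0 : one_plus s 0 = 0.
Proof. by rewrite /one_plus raddf0 addr0. Qed.

Lemma one_plusB m n : one_plus s (m - n) = one_plus s m - one_plus s n.
Proof. by rewrite /one_plus (raddfB s) opprD addrACA. Qed.

Lemma one_plus_one_minus m : s (s m) = m -> one_plus s (one_minus s m) = 0.
Proof.
by move=> ssm; rewrite /one_plus /one_minus (raddfB s) ssm addrC subrKA subrr.
Qed.

End OneMinusAdditive.

Section KleinFourModule.
Variables (V : zmodType) (s1 s2 : {additive V -> V}).
Hypothesis act : Z2xZ2_action s1 s2.

Local Notation d1 := (one_minus s1).
Local Notation d2 := (one_minus s2).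

Definition ker_decomposition : Prop :=
  set_eq (kerZG (fun m => d1 (d2 m))) (setmul (kerZG d1) (kerZG d2)).

Definition common_lifting : Prop :=
  forall m1 m2 : V, one_plus s1 m1 = 0 -> one_plus s2 m2 = 0 ->
    m1 + s1 m2 = m2 + s2 m1 -> exists n : V, m1 = d1 n /\ m2 = d2 n.

Lemma one_minusC m : d1 (d2 m) = d2 (d1 m).
Proof.
case: act => _ _ s12.
by rewrite /one_minus (raddfB s1) (raddfB s2) s12 !opprD !opprK [LHS]addrACA.
Qed.

Lemma cocycle_condition m1 m2 :
  (m1 + s1 m2 = m2 + s2 m1) <-> (d2 m1 = d1 m2).
Proof. exact: addr_eq_subr. Qed.

Lemma setmul_sub_ker m :
  setmul (kerZG d1) (kerZG d2) m -> kerZG (fun m => d1 (d2 m)) m.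
Proof.
case=> [a [b [ha [hb ->]]]]; rewrite /kerZG in ha hb *.
by rewrite /= one_minusD hb addr0 one_minusC ha one_minus0.
Qed.

Lemma ker_decomposition_of_lifting : common_lifting -> ker_decomposition.
Proof.
move=> lift m; split; last exact: setmul_sub_ker.
case: act => _ s22 _ hm.
have [n [dn1 dn2]] : exists n, 0 = d1 n /\ d2 m = d2 n.
  apply: lift; first exact: one_plus0.
    exact: one_plus_one_minus (s22 m).
  by apply/cocycle_condition; rewrite one_minus0 hm.
exists n, (m - n); split; first by rewrite /kerZG dn1.
by split; [rewrite /kerZG one_minusB dn2 subrr | rewrite addrC subrK].
Qed.

Lemma lifting_of_ker_decomposition :
  QH90 s1 s2 -> ker_decomposition -> common_lifting.
Proof.
move=> qh decomp m1 m2 hm1 hm2.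
have [x ->] := qh s1 (or_introl erefl) m1 hm1.
move=> /cocycle_condition e; case: act => _ s22 _.
pose y := m2 - d2 x.
have d1y : d1 y = 0 by rewrite one_minusB one_minusC -e subrr.
have hy : one_plus s2 y = 0.
  by rewrite one_plusB hm2 one_plus_one_minus ?s22 // subrr.
have [z yz] := qh s2 (or_intror erefl) y hy.
have [u [v [du [dv zuv]]]] : setmul (kerZG d1) (kerZG d2) z.
  by apply/decomp; rewrite /kerZG -yz.
exists (x + u); rewrite !one_minusD du addr0; split=> //.
by rewrite -[d2 u]addr0 -dv -one_minusD -zuv -yz addrC subrK.
Qed.

End KleinFourModule.

Theorem theorem3 (V : zmodType) (s1 s2 : {additive V -> V}) :
  Z2xZ2_action s1 s2 ->
  QH90 s1 s2 ->
  (set_eq (kerZG (fun m => one_minus s1 (one_minus s2 m)))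
          (setmul (kerZG (one_minus s1)) (kerZG (one_minus s2)))
   <->
   (forall m1 m2 : V,
      one_plus s1 m1 = 0 -> one_plus s2 m2 = 0 ->
      m1 + s1 m2 = m2 + s2 m1 ->
      exists n : V, m1 = one_minus s1 n /\ m2 = one_minus s2 n)).
Proof.
move=> act qh; split.
- exact: lifting_of_ker_decomposition.
- exact: ker_decomposition_of_lifting.
Qed.
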